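(* Let $\Gamma$ be a basis and $\sigma\in\mathbb{T}$ with $\sigma\neq\omega$ (i.e. $\sigma$ is not equivalent to $\omega$). Then: (1) $\Gamma\vdash x:\sigma$ iff there is $\tau$ with $x:\tau\in\Gamma$ and $\tau\le\sigma$; (2) $\Gamma\vdash\lambda x.M:\sigma$ iff there exist a finite set $I$ and types $(\sigma_i)_{i\in I},(\tau_i)_{i\in I}$ with $\Gamma,x:\sigma_i\vdash M:\tau_i$ for all $i\in I$ and $\bigcap_{i\in I}(\sigma_i\to\tau_i)\le\sigma$; (3) $\Gamma\vdash MN:\sigma$ iff there is $\tau$ with $\Gamma\vdash M:\tau\to\sigma$ and $\Gamma\vdash N:\tau$; (4) $\Gamma\vdash\langle l_i=M_i\mid i\in I\rangle:\sigma$ iff for each $i\in I$ there is $\sigma_i$ with $\Gamma\vdash M_i:\sigma_i$ and $\langle l_i:\sigma_i\mid i\in I\rangle\le\sigma$; (5) $\Gamma\vdash M.l:\sigma$ iff $\Gamma\vdash M:\langle l:\sigma\rangle$; (6) $\Gamma\vdash M\oplus R:\sigma$ iff there exist $\rho_1,\rho_2$ with $\Gamma\vdash M:\rho_1$, $\Gamma\vdash R:\rho_2$, $\mathit{lbl}(R)=\mathit{lbl}(\rho_2)$ and $\rho_1+\rho_2\le\sigma$.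
   Context: \textbf{Terms.} $\Lambda_R\ni M,N ::= x\mid\lambda x.M\mid MN\mid M.l\mid R\mid M\oplus R$, records $R ::= \langle l_i=M_i\mid i\in I\rangle$ ($I$ finite, labels pairwise distinct), $\mathit{lbl}(\langle l_i=M_i\mid i\in I\rangle)=\{l_i\mid i\in I\}$. \textbf{Types.} $\mathbb{T}\ni\sigma ::= a\mid\omega\mid\sigma_1\to\sigma_2\mid\sigma_1\cap\sigma_2\mid\rho$, $\mathbb{T}_R\ni\rho ::= \langle\rangle\mid\langle l:\sigma\rangle\mid\rho_1+\rho_2\mid\rho_1\cap\rho_2$. Subtyping $\le$: least preorder with $\sigma\le\omega$; $\omega\le\omega\to\omega$; $\sigma\cap\tau\le\sigma,\tau$; $\sigma\le\tau_1,\sigma\le\tau_2\Rightarrow\sigma\le\tau_1\cap\tau_2$; $(\sigma\to\tau_1)\cap(\sigma\to\tau_2)\le\sigma\to\tau_1\cap\tau_2$; $\sigma_2\le\sigma_1,\tau_1\le\tau_2\Rightarrow\sigma_1\to\tau_1\le\sigma_2\to\tau_2$; $\langle l:\sigma\rangle\le\langle\rangle$; $\langle l:\sigma\rangle\cap\langle l:\tau\rangle\le\langle l:\sigma\cap\tau\rangle$; $\sigma\le\tau\Rightarrow\langle l:\sigma\rangle\le\langle l:\tau\rangle$; $\rho+\langle\rangle=\langle\rangle+\rho=\rho$; $(\rho_1+\rho_2)+\rho_3=\rho_1+(\rho_2+\rho_3)$; $(\rho_1\cap\rho_2)+\rho_3=(\rho_1+\rho_3)\cap(\rho_2+\rho_3)$;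 $\langle l:\sigma\rangle+(\langle l:\tau\rangle\cap\rho)=\langle l:\tau\rangle\cap\rho$; $\langle l:\sigma\rangle+(\langle l':\tau\rangle\cap\rho)=\langle l':\tau\rangle\cap(\langle l:\sigma\rangle+\rho)$ if $l\neq l'$; $\rho_1\le\rho_2\Rightarrow\rho_1+\rho\le\rho_2+\rho$; $\rho_1=\rho_2\Rightarrow\rho+\rho_1=\rho+\rho_2$ ($=$ is $\le$ both ways). Notation $\langle l_i:\sigma_i\mid i\in I\rangle=\bigcap_{i\in I}\langle l_i:\sigma_i\rangle$ ($\langle\rangle$ if $I=\emptyset$). $\mathit{lbl}(\langle\rangle)=\emptyset$, $\mathit{lbl}(\langle l:\sigma\rangle)=\{l\}$, $\mathit{lbl}(\rho_1\cap\rho_2)=\mathit{lbl}(\rho_1+\rho_2)=\mathit{lbl}(\rho_1)\cup\mathit{lbl}(\rho_2)$. \textbf{Type assignment.} A basis is a finite set of $x:\sigma$ with distinct variables; $\Gamma,x:\sigma$ presupposes $x\notin\mathrm{dom}(\Gamma)$. Rules: $\Gamma\vdash x:\sigma$ if $x:\sigma\in\Gamma$; from $\Gamma,x:\sigma\vdash M:\tau$ infer $\Gamma\vdash\lambda x.M:\sigma\to\tau$; from $\Gamma\vdash M:\sigma\to\tau$, $\Gamma\vdash N:\sigma$ infer $\Gamma\vdash MN:\tau$; $\cap$-introduction; $\Gamma\vdash M:\omega$; subsumption along $\le$; $\Gamma\vdash\langle l_i=M_i\mid i\in I\rangle:\langle\rangle$; from $\Gamma\vdash M_k:\sigma$, $k\in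 I$ infer $\Gamma\vdash\langle l_i=M_i\mid i\in I\rangle:\langle l_k:\sigma\rangle$; from $\Gamma\vdash M:\langle l:\sigma\rangle$ infer $\Gamma\vdash M.l:\sigma$; from $\Gamma\vdash M:\rho_1$, $\Gamma\vdash R:\rho_2$, $\mathit{lbl}(R)=\mathit{lbl}(\rho_2)$ infer $\Gamma\vdash M\oplus R:\rho_1+\rho_2$. *)

From Stdlib Require Import List.
Import ListNotations.

Definition var := nat.
Definition label := nat.
Definition atom := nat.

(* Terms of Lambda_R.  A record <l_i = M_i | i in I> is a list of
   (label, term) pairs; M (+) R takes the record R as its field list. *)
Inductive term : Type :=
| Var  : var -> term
| Lam  : var -> term -> term
| App  : term -> term -> term
| Proj : term -> label -> term
| Rcd  : list (label * term) -> term
| Ext  : term -> list (label * term) -> term.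

Inductive wf_term : term -> Prop :=
| wf_var x : wf_term (Var x)
| wf_lam x M : wf_term M -> wf_term (Lam x M)
| wf_app M N : wf_term M -> wf_term N -> wf_term (App M N)
| wf_proj M l : wf_term M -> wf_term (Proj M l)
| wf_rcd fs : NoDup (map fst fs) ->
    (forall l M, In (l, M) fs -> wf_term M) -> wf_term (Rcd fs)
| wf_ext M fs : wf_term M -> NoDup (map fst fs) ->
    (forall l M', In (l, M') fs -> wf_term M') -> wf_term (Ext M fs).

(* Raw type syntax; T and T_R are carved out by [wf_ty] and [is_rty]. *)
Inductive ty : Type :=
| TAtom   : atom -> ty
| TOmega  : ty
| TArrow  : ty -> ty -> ty
| TInter  : ty -> ty -> ty
| TREmpty : ty
| TRField : label -> ty -> ty
| TRPlus  : ty -> ty -> ty.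

(* membership in T_R (top-level shape) *)
Fixpoint is_rty (t : ty) : Prop :=
  match t with
  | TREmpty => True
  | TRField _ _ => True
  | TRPlus a b => is_rty a /\ is_rty b
  | TInter a b => is_rty a /\ is_rty b
  | _ => False
  end.

Fixpoint wf_ty (t : ty) : Prop :=
  match t with
  | TAtom _ | TOmega | TREmpty => True
  | TArrow a b | TInter a b => wf_ty a /\ wf_ty b
  | TRField _ s => wf_ty s
  | TRPlus a b => is_rty a /\ is_rty b /\ wf_ty a /\ wf_ty b
  end.

Fixpoint lbl (t : ty) : list label :=
  match t with
  | TRField l _ => [l]
  | TRPlus a b | TInter a b => lbl a ++ lbl b
  | _ => []
  end.

(* Subtyping: least preorder closed under the rules of the paper.
   Transitivity goes through types of T only, so that on T this is exactly
   the paper's relation. *)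
Inductive le : ty -> ty -> Prop :=
| le_refl s : le s s
| le_trans s t u : wf_ty t -> le s t -> le t u -> le s u
| le_omega s : le s TOmega
| le_omega_arrow : le TOmega (TArrow TOmega TOmega)
| le_inter_l s t : le (TInter s t) s
| le_inter_r s t : le (TInter s t) t
| le_inter_glb s t1 t2 : le s t1 -> le s t2 -> le s (TInter t1 t2)
| le_arrow_inter s t1 t2 :
    le (TInter (TArrow s t1) (TArrow s t2)) (TArrow s (TInter t1 t2))
| le_arrow s1 s2 t1 t2 : le s2 s1 -> le t1 t2 -> le (TArrow s1 t1) (TArrow s2 t2)
| le_field_empty l s : le (TRField l s) TREmpty
| le_field_inter l s t : le (TInter (TRField l s) (TRField l t)) (TRField l (TInter s t))
| le_field l s t : le s t -> le (TRField l s) (TRField l t)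
| le_plus_empty_r1 r : is_rty r -> le (TRPlus r TREmpty) r
| le_plus_empty_r2 r : is_rty r -> le r (TRPlus r TREmpty)
| le_plus_empty_l1 r : is_rty r -> le (TRPlus TREmpty r) r
| le_plus_empty_l2 r : is_rty r -> le r (TRPlus TREmpty r)
| le_plus_assoc1 r1 r2 r3 : is_rty r1 -> is_rty r2 -> is_rty r3 ->
    le (TRPlus (TRPlus r1 r2) r3) (TRPlus r1 (TRPlus r2 r3))
| le_plus_assoc2 r1 r2 r3 : is_rty r1 -> is_rty r2 -> is_rty r3 ->
    le (TRPlus r1 (TRPlus r2 r3)) (TRPlus (TRPlus r1 r2) r3)
| le_plus_distr1 r1 r2 r3 : is_rty r1 -> is_rty r2 -> is_rty r3 ->
    le (TRPlus (TInter r1 r2) r3) (TInter (TRPlus r1 r3) (TRPlus r2 r3))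
| le_plus_distr2 r1 r2 r3 : is_rty r1 -> is_rty r2 -> is_rty r3 ->
    le (TInter (TRPlus r1 r3) (TRPlus r2 r3)) (TRPlus (TInter r1 r2) r3)
| le_plus_same1 l s t r : is_rty r ->
    le (TRPlus (TRField l s) (TInter (TRField l t) r)) (TInter (TRField l t) r)
| le_plus_same2 l s t r : is_rty r ->
    le (TInter (TRField l t) r) (TRPlus (TRField l s) (TInter (TRField l t) r))
| le_plus_diff1 l l' s t r : l <> l' -> is_rty r ->
    le (TRPlus (TRField l s) (TInter (TRField l' t) r))
       (TInter (TRField l' t) (TRPlus (TRField l s) r))
| le_plus_diff2 l l' s t r : l <> l' -> is_rty r ->
    le (TInter (TRField l' t) (TRPlus (TRField l s) r))
       (TRPlus (TRField l s) (TInter (TRField l' t) r))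
| le_plus_mono_l r1 r2 r : is_rty r1 -> is_rty r2 -> is_rty r ->
    le r1 r2 -> le (TRPlus r1 r) (TRPlus r2 r)
| le_plus_cong_r r r1 r2 : is_rty r -> is_rty r1 -> is_rty r2 ->
    le r1 r2 -> le r2 r1 -> le (TRPlus r r1) (TRPlus r r2).

Definition basis := list (var * ty).
Definition dom (G : basis) : list var := map fst G.
Definition is_basis (G : basis) : Prop :=
  NoDup (dom G) /\ (forall x s, In (x, s) G -> wf_ty s).

Inductive typ : basis -> term -> ty -> Prop :=
| t_var G x s : In (x, s) G -> typ G (Var x) s
| t_lam G x M s t : ~ In x (dom G) -> wf_ty s ->
    typ ((x, s) :: G) M t -> typ G (Lam x M) (TArrow s t)
| t_app G M N s t : typ G M (TArrow s t) -> typ G N s -> typ G (App M N) t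
| t_inter G M s t : typ G M s -> typ G M t -> typ G M (TInter s t)
| t_omega G M : typ G M TOmega
| t_sub G M s t : typ G M s -> le s t -> wf_ty t -> typ G M t
| t_rempty G fs : typ G (Rcd fs) TREmpty
| t_rfield G fs l M s : In (l, M) fs -> typ G M s -> typ G (Rcd fs) (TRField l s)
| t_proj G M l s : typ G M (TRField l s) -> typ G (Proj M l) s
| t_ext G M fs r1 r2 : is_rty r1 -> is_rty r2 ->
    typ G M r1 -> typ G (Rcd fs) r2 ->
    (forall l, In l (map fst fs) <-> In l (lbl r2)) ->
    typ G (Ext M fs) (TRPlus r1 r2).

Fixpoint big_inter (l : list ty) : ty :=
  match l with
  | [] => TOmega
  | [a] => a
  | a :: r => TInter a (big_inter r)
  end.

Fixpoint rec_ty (l : list (label * ty)) : ty :=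
  match l with
  | [] => TREmpty
  | [(a, s)] => TRField a s
  | (a, s) :: r => TInter (TRField a s) (rec_ty r)
  end.

(* Call a type of a term E syntax-directed when it is obtained by the typing rule
   for the head constructor of E followed by one subsumption.  By induction on
   derivations, every type σ of E satisfies ω ≤ σ or is syntax-directed, because
   syntax-directed types are closed upwards along ≤ and under ∩.
   The only delicate closure is for record extension, which needs
   (ρ1 ∩ ρ1') + (ρ2 ∩ ρ2') ≤ ρ1 + ρ2 when ρ2 and ρ2' carry the same labels, i.e.
   monotonicity of + in its right argument.  The rules only let the right summand
   vary up to equivalence, so this goes through normal forms: every record type is
   equivalent to an intersection of fields ⟨l1:σ1⟩ ∩ ... ∩ ⟨ln:σn⟩ ∩ ⟨⟩, and on
   normal forms ρ1 + ρ2 is the intersection of the fields of ρ2 with those fields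
   of ρ1 whose labels ρ2 does not mention. *)

From Stdlib Require Import List PeanoNat.
Import ListNotations.

Lemma wf_ty_arrow a b : wf_ty a -> wf_ty b -> wf_ty (TArrow a b).
Proof. split; assumption. Qed.

Lemma wf_ty_inter a b : wf_ty a -> wf_ty b -> wf_ty (TInter a b).
Proof. split; assumption. Qed.

Lemma wf_ty_field l a : wf_ty a -> wf_ty (TRField l a).
Proof. exact (fun H => H). Qed.

Lemma wf_ty_plus a b : is_rty a -> is_rty b -> wf_ty a -> wf_ty b -> wf_ty (TRPlus a b).
Proof. repeat split; assumption. Qed.

Lemma is_rty_inter a b : is_rty a -> is_rty b -> is_rty (TInter a b).
Proof. split; assumption. Qed.

Create HintDb wf.
Global Hint Resolve wf_ty_arrow wf_ty_inter wf_ty_field wf_ty_plus is_rty_inter : wf.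
Global Hint Extern 1 (wf_ty TOmega) => exact I : wf.
Global Hint Extern 1 (wf_ty TREmpty) => exact I : wf.
Global Hint Extern 1 (is_rty TREmpty) => exact I : wf.
Global Hint Extern 1 (is_rty (TRField _ _)) => exact I : wf.
Ltac solve_wf := solve [eauto 10 with wf].
Ltac le_via m := apply (le_trans _ m); [solve_wf | | ].

Definition eqv (a b : ty) : Prop := le a b /\ le b a.

Lemma eqv_refl a : eqv a a.
Proof. split; apply le_refl. Qed.

Lemma eqv_trans a b c : wf_ty b -> eqv a b -> eqv b c -> eqv a c.
Proof. intros Wb [] []; split; eapply le_trans; eauto. Qed.

Lemma le_inter_mono a b a' b' :
  wf_ty a -> wf_ty b -> le a a' -> le b b' -> le (TInter a b) (TInter a' b').
Proof.
  intros Wa Wb Ha Hb; apply le_inter_glb.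
  - le_via a; [apply le_inter_l | exact Ha].
  - le_via b; [apply le_inter_r | exact Hb].
Qed.

Lemma eqv_inter a b a' b' : wf_ty a -> wf_ty b -> wf_ty a' -> wf_ty b' ->
  eqv a a' -> eqv b b' -> eqv (TInter a b) (TInter a' b').
Proof. intros ? ? ? ? [] []; split; apply le_inter_mono; assumption. Qed.

Lemma eqv_plus a b a' b' :
  is_rty a -> is_rty b -> is_rty a' -> is_rty b' ->
  wf_ty a -> wf_ty b -> wf_ty a' -> wf_ty b' ->
  eqv a a' -> eqv b b' -> eqv (TRPlus a b) (TRPlus a' b').
Proof.
  intros ? ? ? ? ? ? ? ? [] []; split.
  - le_via (TRPlus a' b); [apply le_plus_mono_l | apply le_plus_cong_r]; assumption.
  - le_via (TRPlus a b'); [apply le_plus_mono_l | apply le_plus_cong_r]; assumption.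
Qed.

(** * Record types in normal form *)

Fixpoint rec_nf (L : list (label * ty)) : ty :=
  match L with
  | [] => TREmpty
  | (l, t) :: L' => TInter (TRField l t) (rec_nf L')
  end.

Definition wf_fields (L : list (label * ty)) : Prop :=
  forall l t, In (l, t) L -> wf_ty t.

Lemma wf_fields_incl L L' : incl L' L -> wf_fields L -> wf_fields L'.
Proof. intros Hi HL l t H; exact (HL l t (Hi _ H)). Qed.

Lemma wf_fields_cons l t L : wf_ty t -> wf_fields L -> wf_fields ((l, t) :: L).
Proof. intros Wt HL l' t' [E | H]; [injection E as <- <-; exact Wt | exact (HL _ _ H)]. Qed.

Lemma wf_fields_nil : wf_fields [].
Proof. intros l t []. Qed.

Lemma wf_fields_head l t L : wf_fields ((l, t) :: L) -> wf_ty t.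
Proof. intros HL; exact (HL l t (or_introl eq_refl)). Qed.

Lemma wf_fields_tail p L : wf_fields (p :: L) -> wf_fields L.
Proof. apply wf_fields_incl, incl_tl, incl_refl. Qed.

Lemma wf_fields_app L1 L2 : wf_fields L1 -> wf_fields L2 -> wf_fields (L1 ++ L2).
Proof. intros H1 H2 l t H; apply in_app_or in H as [H | H]; eauto. Qed.

Lemma rec_nf_rty L : is_rty (rec_nf L).
Proof. induction L as [| [l t] L IH]; cbn; auto. Qed.

Lemma rec_nf_wf L : wf_fields L -> wf_ty (rec_nf L).
Proof.
  induction L as [| [l t] L IH]; intros HL; cbn; [exact I |].
  split; [exact (wf_fields_head _ _ _ HL) | exact (IH (wf_fields_tail _ _ HL))].
Qed.

Global Hint Resolve wf_fields_nil rec_nf_rty rec_nf_wf wf_fields_cons wf_fields_app : wf.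
Global Hint Extern 1 (wf_ty ?t) =>
  match goal with H : wf_fields ((_, t) :: _) |- _ => exact (wf_fields_head _ _ _ H) end : wf.
Global Hint Extern 1 (wf_fields ?L) =>
  match goal with H : wf_fields (_ :: L) |- _ => exact (wf_fields_tail _ _ H) end : wf.

Lemma rec_nf_le_empty L : wf_fields L -> le (rec_nf L) TREmpty.
Proof.
  destruct L as [| [l t] L]; intros HL; cbn; [apply le_refl |].
  le_via (TRField l t); [apply le_inter_l | apply le_field_empty].
Qed.

Lemma rec_nf_le_field L l t : wf_fields L -> In (l, t) L -> le (rec_nf L) (TRField l t).
Proof.
  induction L as [| [l' t'] L IH]; intros HL Hi; [destruct Hi |].
  destruct Hi as [E | Hi]; cbn.
  - injection E as -> ->; apply le_inter_l.
  - le_via (rec_nf L); [apply le_inter_r | exact (IH (wf_fields_tail _ _ HL) Hi)].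
Qed.

Lemma rec_nf_glb s L : (forall l t, In (l, t) L -> le s (TRField l t)) -> le s TREmpty ->
  le s (rec_nf L).
Proof.
  induction L as [| [l t] L IH]; intros Hf He; cbn; [exact He |].
  apply le_inter_glb; [apply Hf; left; reflexivity |].
  apply IH; [intros; apply Hf; right |]; assumption.
Qed.

Lemma rec_nf_incl L L' : wf_fields L -> incl L' L -> le (rec_nf L) (rec_nf L').
Proof.
  intros HL Hi; apply rec_nf_glb; [| apply rec_nf_le_empty, HL].
  intros l t H; apply rec_nf_le_field; auto.
Qed.

Lemma rec_nf_same_fields L L' : wf_fields L -> wf_fields L' ->
  (forall p, In p L <-> In p L') -> eqv (rec_nf L) (rec_nf L').
Proof. intros HL HL' E; split; apply rec_nf_incl; auto; intros p; apply E. Qed.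

Lemma rec_nf_app L1 L2 : wf_fields L1 -> wf_fields L2 ->
  eqv (TInter (rec_nf L1) (rec_nf L2)) (rec_nf (L1 ++ L2)).
Proof.
  intros H1 H2; split.
  - apply rec_nf_glb.
    + intros l t Hi; apply in_app_or in Hi as [Hi | Hi].
      * le_via (rec_nf L1); [apply le_inter_l | apply rec_nf_le_field; assumption].
      * le_via (rec_nf L2); [apply le_inter_r | apply rec_nf_le_field; assumption].
    + le_via (rec_nf L1); [apply le_inter_l | apply rec_nf_le_empty, H1].
  - apply le_inter_glb; apply rec_nf_incl; auto with wf; intros p Hp; apply in_or_app; auto.
Qed.

Definition unshadowed (L : list (label * ty)) (p : label * ty) : bool :=
  if in_dec Nat.eq_dec (fst p) (map fst L) then false else true.

Definition rec_override (L1 L2 : list (label * ty)) : list (label * ty) :=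
  L2 ++ filter (unshadowed L2) L1.

Lemma in_rec_override p L1 L2 : In p (rec_override L1 L2) <->
  In p L2 \/ (In p L1 /\ ~ In (fst p) (map fst L2)).
Proof.
  unfold rec_override, unshadowed; rewrite in_app_iff, filter_In.
  destruct (in_dec Nat.eq_dec (fst p) (map fst L2)); intuition discriminate.
Qed.

Lemma wf_fields_filter f L : wf_fields L -> wf_fields (filter f L).
Proof. apply wf_fields_incl; intros p; rewrite filter_In; tauto. Qed.

Lemma wf_rec_override L1 L2 : wf_fields L1 -> wf_fields L2 ->
  wf_fields (rec_override L1 L2).
Proof.
  intros H1 H2; apply wf_fields_app; [exact H2 | apply wf_fields_filter, H1].
Qed.

Global Hint Resolve wf_fields_filter wf_rec_override : wf.

Lemma labels_rec_override x L1 L2 : In x (map fst (rec_override L1 L2)) <->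
  In x (map fst L1) \/ In x (map fst L2).
Proof.
  rewrite !in_map_iff; split.
  - intros [p [<- H]]; apply in_rec_override in H as [H | [H _]]; eauto.
  - intros [[p [<- H]] | [p [<- H]]].
    + destruct (in_dec Nat.eq_dec (fst p) (map fst L2)) as [Hin | Hout].
      * apply in_map_iff in Hin as [q [E Hq]].
        exists q; split; [exact E | apply in_rec_override; auto].
      * exists p; split; [reflexivity | apply in_rec_override; auto].
    + exists p; split; [reflexivity | apply in_rec_override; auto].
Qed.

Lemma field_plus_rec_nf l s L : wf_ty s -> wf_fields L ->
  eqv (TRPlus (TRField l s) (rec_nf L)) (rec_nf (rec_override [(l, s)] L)).
Proof.
  intros Ws; induction L as [| [l' t] L IH]; intros HL.
  - apply (eqv_trans _ (rec_nf [(l, s)])); [solve_wf | split |].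
    + le_via (TRField l s); [apply le_plus_empty_r1; exact I |].
      apply le_inter_glb; [apply le_refl | apply le_field_empty].
    + le_via (TRField l s); [apply le_inter_l | apply le_plus_empty_r2; exact I].
    + apply rec_nf_same_fields; [solve_wf .. |].
      intros p; rewrite in_rec_override; cbn; intuition.
  - destruct (Nat.eq_dec l' l) as [-> | Hne].
    + apply (eqv_trans _ (rec_nf ((l, t) :: L))); [solve_wf | split |].
      * apply le_plus_same1, rec_nf_rty.
      * apply le_plus_same2, rec_nf_rty.
      * apply rec_nf_same_fields; [solve_wf .. |].
        intros [l0 t0]; rewrite in_rec_override; cbn; intuition congruence.
    + apply (eqv_trans _ (TInter (TRField l' t) (TRPlus (TRField l s) (rec_nf L)))).
      { solve_wf. }
      { split; [apply le_plus_diff1 | apply le_plus_diff2]; auto using rec_nf_rty. }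
      apply (eqv_trans _ (rec_nf ((l', t) :: rec_override [(l, s)] L))); [solve_wf | |].
      * apply eqv_inter; [solve_wf .. | apply eqv_refl | apply IH; eauto with wf].
      * apply rec_nf_same_fields; [solve_wf .. |].
        intros [l0 t0]; cbn [In]; rewrite !in_rec_override; cbn; intuition congruence.
Qed.

Lemma rec_nf_plus L1 L2 : wf_fields L1 -> wf_fields L2 ->
  eqv (TRPlus (rec_nf L1) (rec_nf L2)) (rec_nf (rec_override L1 L2)).
Proof.
  intros H1 H2; induction L1 as [| [l t] L1 IH].
  - apply (eqv_trans _ (rec_nf L2)); [solve_wf | split |].
    + apply le_plus_empty_l1, rec_nf_rty.
    + apply le_plus_empty_l2, rec_nf_rty.
    + apply rec_nf_same_fields; [solve_wf .. |].
      intros [l0 t0]; rewrite in_rec_override; cbn; intuition.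
  - apply (eqv_trans _
      (TInter (TRPlus (TRField l t) (rec_nf L2)) (TRPlus (rec_nf L1) (rec_nf L2)))).
    { solve_wf. }
    { split; [apply le_plus_distr1 | apply le_plus_distr2]; cbn; auto using rec_nf_rty. }
    apply (eqv_trans _ (TInter (rec_nf (rec_override [(l, t)] L2)) (rec_nf (rec_override L1 L2)))).
    { solve_wf. }
    { apply eqv_inter; [solve_wf .. | apply field_plus_rec_nf | apply IH]; eauto with wf. }
    apply (eqv_trans _ (rec_nf (rec_override [(l, t)] L2 ++ rec_override L1 L2))).
    { solve_wf. }
    { apply rec_nf_app; solve_wf. }
    apply rec_nf_same_fields; [solve_wf .. |].
    intros [l0 t0]; rewrite in_app_iff, !in_rec_override; cbn; intuition congruence.
Qed.

Lemma rec_nf_plus_mono_r Lr LX LY : wf_fields Lr -> wf_fields LX -> wf_fields LY ->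
  le (rec_nf LX) (rec_nf LY) -> incl (map fst LX) (map fst LY) ->
  le (TRPlus (rec_nf Lr) (rec_nf LX)) (TRPlus (rec_nf Lr) (rec_nf LY)).
Proof.
  intros Hr HX HY Hle Hl.
  assert (Hsub : incl (filter (unshadowed LY) Lr) (filter (unshadowed LX) Lr)).
  { intros p; rewrite !filter_In; unfold unshadowed.
    destruct (in_dec Nat.eq_dec (fst p) (map fst LX)),
             (in_dec Nat.eq_dec (fst p) (map fst LY)); intuition. }
  le_via (rec_nf (rec_override Lr LX)); [exact (proj1 (rec_nf_plus _ _ Hr HX)) |].
  le_via (TInter (rec_nf LX) (rec_nf (filter (unshadowed LX) Lr))).
  { exact (proj2 (rec_nf_app _ _ HX (wf_fields_filter _ _ Hr))). }
  le_via (TInter (rec_nf LY) (rec_nf (filter (unshadowed LY) Lr))).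
  { apply le_inter_mono; [solve_wf .. | exact Hle | apply rec_nf_incl; solve_wf]. }
  le_via (rec_nf (rec_override Lr LY)).
  { exact (proj1 (rec_nf_app _ _ HY (wf_fields_filter _ _ Hr))). }
  exact (proj2 (rec_nf_plus _ _ Hr HY)).
Qed.

Lemma rty_normal_form r : is_rty r -> wf_ty r ->
  exists L, wf_fields L /\ eqv r (rec_nf L) /\ (forall l, In l (lbl r) <-> In l (map fst L)).
Proof.
  induction r as [| | | r1 IH1 r2 IH2 | | l t _ | r1 IH1 r2 IH2]; cbn; try tauto.
  - intros [R1 R2] [W1 W2].
    destruct (IH1 R1 W1) as [L1 [H1 [E1 B1]]], (IH2 R2 W2) as [L2 [H2 [E2 B2]]].
    exists (L1 ++ L2); split; [solve_wf | split].
    + apply (eqv_trans _ (TInter (rec_nf L1) (rec_nf L2)));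
        [solve_wf | | apply rec_nf_app; assumption].
      apply eqv_inter; solve_wf || assumption.
    + intros l; rewrite map_app, !in_app_iff, B1, B2; tauto.
  - intros _ _; exists []; split; [solve_wf |]; split; [apply eqv_refl | tauto].
  - intros _ Wt; exists [(l, t)]; split; [solve_wf | split; [split | intros; cbn; tauto]].
    + apply le_inter_glb; [apply le_refl | apply le_field_empty].
    + apply le_inter_l.
  - intros [R1 R2] [_ [_ [W1 W2]]].
    destruct (IH1 R1 W1) as [L1 [H1 [E1 B1]]], (IH2 R2 W2) as [L2 [H2 [E2 B2]]].
    exists (rec_override L1 L2); split; [solve_wf | split].
    + apply (eqv_trans _ (TRPlus (rec_nf L1) (rec_nf L2)));
        [solve_wf | | apply rec_nf_plus; assumption].
      apply eqv_plus; solve_wf || assumption.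
    + intros l; rewrite labels_rec_override, in_app_iff, B1, B2; tauto.
Qed.

Lemma le_plus_mono_r r X Y : is_rty r -> is_rty X -> is_rty Y ->
  wf_ty r -> wf_ty X -> wf_ty Y -> le X Y -> incl (lbl X) (lbl Y) ->
  le (TRPlus r X) (TRPlus r Y).
Proof.
  intros Rr RX RY Wr WX WY Hle Hl.
  destruct (rty_normal_form r Rr Wr) as [Lr [Hr [Er _]]],
           (rty_normal_form X RX WX) as [LX [HX [EX BX]]],
           (rty_normal_form Y RY WY) as [LY [HY [EY BY]]].
  assert (EX' : eqv (TRPlus r X) (TRPlus (rec_nf Lr) (rec_nf LX)))
    by (apply eqv_plus; solve_wf || assumption).
  assert (EY' : eqv (TRPlus r Y) (TRPlus (rec_nf Lr) (rec_nf LY)))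
    by (apply eqv_plus; solve_wf || assumption).
  le_via (TRPlus (rec_nf Lr) (rec_nf LX)); [apply EX' |].
  le_via (TRPlus (rec_nf Lr) (rec_nf LY)); [| apply EY'].
  apply rec_nf_plus_mono_r; try assumption.
  - le_via X; [apply EX |]; le_via Y; [exact Hle | apply EY].
  - intros l H; apply BY, Hl, BX, H.
Qed.

Lemma rec_ty_wf L : wf_fields L -> wf_ty (rec_ty L).
Proof.
  induction L as [| [l t] [| p L] IH]; intros HL; cbn in *; auto with wf.
Qed.

Global Hint Resolve rec_ty_wf : wf.

Lemma rec_ty_eqv_rec_nf L : wf_fields L -> eqv (rec_ty L) (rec_nf L).
Proof.
  induction L as [| [l t] [| p L] IH]; intros HL.
  - apply eqv_refl.
  - split; cbn.
    + apply le_inter_glb; [apply le_refl | apply le_field_empty].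
    + apply le_inter_l.
  - change (eqv (TInter (TRField l t) (rec_ty (p :: L))) (TInter (TRField l t) (rec_nf (p :: L)))).
    apply eqv_inter; [solve_wf .. | apply eqv_refl | apply IH; eauto with wf].
Qed.

Lemma wf_fields_combine ls ss : Forall wf_ty ss -> wf_fields (combine ls ss).
Proof.
  intros Hss l t H; apply in_combine_r in H.
  exact (proj1 (Forall_forall _ _) Hss t H).
Qed.

Global Hint Resolve wf_fields_combine : wf.

Lemma rec_ty_combine_mono ls ss ss' : Forall wf_ty ss -> Forall wf_ty ss' ->
  Forall2 le ss ss' -> le (rec_ty (combine ls ss)) (rec_ty (combine ls ss')).
Proof.
  intros W W' Hle.
  le_via (rec_nf (combine ls ss)); [apply rec_ty_eqv_rec_nf; solve_wf |].
  le_via (rec_nf (combine ls ss')); [| apply rec_ty_eqv_rec_nf; solve_wf].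
  clear W'; revert ss ss' W Hle; induction ls as [| l ls IH]; intros ss ss' W Hle.
  - apply le_refl.
  - destruct Hle as [| a b ss ss' Hab Hle]; [apply le_refl |]; cbn.
    inversion W; subst.
    apply le_inter_mono; [solve_wf .. | apply le_field, Hab | apply IH; assumption].
Qed.

Lemma big_inter_wf l : Forall wf_ty l -> wf_ty (big_inter l).
Proof.
  induction 1 as [| a [| b l] Wa Wl IH]; cbn in *; auto with wf.
Qed.

Global Hint Resolve big_inter_wf : wf.

Lemma big_inter_le l a : Forall wf_ty l -> In a l -> le (big_inter l) a.
Proof.
  induction 1 as [| b [| c l] Wb Wl IH]; intros Hi; [destruct Hi | |].
  - destruct Hi as [-> | []]; apply le_refl.
  - destruct Hi as [-> | Hi]; [apply le_inter_l |].
    le_via (big_inter (c :: l)); [apply le_inter_r | exact (IH Hi)].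
Qed.

Lemma big_inter_glb s l : (forall a, In a l -> le s a) -> le s (big_inter l).
Proof.
  induction l as [| b [| c l] IH]; intros H; cbn.
  - apply le_omega.
  - apply H; left; reflexivity.
  - apply le_inter_glb; [apply H; left; reflexivity |].
    apply IH; intros a Ha; apply H; right; exact Ha.
Qed.

Lemma big_inter_app l1 l2 : Forall wf_ty (l1 ++ l2) ->
  le (big_inter (l1 ++ l2)) (TInter (big_inter l1) (big_inter l2)).
Proof.
  intros W; apply le_inter_glb; apply big_inter_glb; intros a Ha;
    apply big_inter_le; auto using in_or_app.
Qed.

Lemma typ_big_inter G M l : (forall a, In a l -> typ G M a) -> typ G M (big_inter l).
Proof.
  induction l as [| b [| c l] IH]; intros H.
  - apply t_omega.
  - apply H; left; reflexivity.
  - apply t_inter; [apply H; left; reflexivity |].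
    apply IH; intros a Ha; apply H; right; exact Ha.
Qed.

(** * Syntax-directed typings *)

Lemma is_basis_cons G x s : is_basis G -> ~ In x (dom G) -> wf_ty s ->
  is_basis ((x, s) :: G).
Proof.
  intros [HN HW] Hx Ws; split; [constructor; assumption |].
  intros y t [E | H]; [injection E as <- <-; exact Ws | exact (HW y t H)].
Qed.

Lemma typ_wf G M s : typ G M s -> is_basis G -> wf_ty s.
Proof.
  induction 1 as [G x s H | G x M s t Hx Ws _ IH | G M N s t _ IH _ _ | G M s t _ IH1 _ IH2
                  | | G M s t _ _ _ Wt | | G fs l M s _ _ IH | G M l s _ IH
                  | G M fs r1 r2 R1 R2 _ IH1 _ IH2 _]; intros HB.
  - exact (proj2 HB x s H).
  - apply wf_ty_arrow; [exact Ws | apply IH, is_basis_cons; assumption].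
  - exact (proj2 (IH HB)).
  - apply wf_ty_inter; auto.
  - exact I.
  - exact Wt.
  - exact I.
  - exact (IH HB).
  - exact (IH HB).
  - apply wf_ty_plus; auto.
Qed.

Lemma NoDup_fst_unique {A B : Type} (G : list (A * B)) x a b :
  NoDup (map fst G) -> In (x, a) G -> In (x, b) G -> a = b.
Proof.
  induction G as [| [y c] G IH]; intros HN Ha Hb; [destruct Ha |].
  inversion HN as [| ? ? Hy HN']; subst.
  destruct Ha as [Ea | Ha], Hb as [Eb | Hb].
  - congruence.
  - injection Ea as -> ->; destruct Hy; exact (in_map fst _ _ Hb).
  - injection Eb as -> ->; destruct Hy; exact (in_map fst _ _ Ha).
  - exact (IH HN' Ha Hb).
Qed.

Lemma combine_map_fst {A B C : Type} (fs : list (A * B)) (g : A * B -> C) :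
  combine (map fst fs) (map g fs) = map (fun f => (fst f, g f)) fs.
Proof. induction fs as [| f fs IH]; cbn; [| rewrite IH]; reflexivity. Qed.

Definition fields_typ (G : basis) (fs : list (label * term)) (ss : list ty) : Prop :=
  Forall2 (fun f t => wf_ty t /\ typ G (snd f) t) fs ss.

Lemma fields_typ_wf G fs ss : fields_typ G fs ss -> Forall wf_ty ss.
Proof. induction 1 as [| f t fs ss [Wt _] _ IH]; constructor; assumption. Qed.

Lemma fields_typ_map G fs (g : label * term -> ty) :
  (forall f, In f fs -> wf_ty (g f) /\ typ G (snd f) (g f)) -> fields_typ G fs (map g fs).
Proof.
  induction fs as [| f fs IH]; intros H; constructor.
  - apply H; left; reflexivity.
  - apply IH; intros f' Hf'; apply H; right; exact Hf'.
Qed.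

Lemma fields_typ_inter G fs ss1 ss2 : fields_typ G fs ss1 -> fields_typ G fs ss2 ->
  exists ss, fields_typ G fs ss /\ Forall2 le ss ss1 /\ Forall2 le ss ss2.
Proof.
  intros H1; revert ss2; induction H1 as [| f a fs ss1 [Wa Ta] _ IH]; intros ss2 H2.
  - inversion H2; subst; exists []; repeat constructor.
  - inversion H2 as [| ? b ? ss2' [Wb Tb] H2']; subst.
    destruct (IH _ H2') as [ss [H [L1 L2]]].
    exists (TInter a b :: ss); repeat split; constructor; auto using t_inter with wf.
    + apply le_inter_l.
    + apply le_inter_r.
Qed.

Lemma typ_rec_ty G fs0 fs ss : fields_typ G fs ss -> incl fs fs0 ->
  typ G (Rcd fs0) (rec_ty (combine (map fst fs) ss)).
Proof.
  induction 1 as [| [l M] t fs ss [_ T] _ IH]; intros Hi; [apply t_rempty |].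
  assert (Tl : typ G (Rcd fs0) (TRField l t)) by (apply (t_rfield _ _ _ M); auto with datatypes).
  assert (Tr : typ G (Rcd fs0) (rec_ty (combine (map fst fs) ss)))
    by (apply IH; intros f Hf; apply Hi; right; exact Hf).
  cbn; destruct (combine (map fst fs) ss); [exact Tl | apply t_inter; assumption].
Qed.

Definition arrows (ps : list (ty * ty)) : list ty :=
  map (fun p => TArrow (fst p) (snd p)) ps.

Lemma arrows_wf ps : (forall p, In p ps -> wf_ty (fst p) /\ wf_ty (snd p)) ->
  Forall wf_ty (arrows ps).
Proof.
  intros H; apply Forall_forall; intros t Ht.
  apply in_map_iff in Ht as [p [<- Hp]]; destruct (H p Hp); solve_wf.
Qed.

Definition syntax_directed_typ (G : basis) (E : term) (s : ty) : Prop :=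
  match E with
  | Var x => exists t, In (x, t) G /\ le t s
  | Lam x M => exists ps : list (ty * ty),
      (forall p, In p ps ->
         wf_ty (fst p) /\ wf_ty (snd p) /\ ~ In x (dom G) /\ typ ((x, fst p) :: G) M (snd p)) /\
      le (big_inter (arrows ps)) s
  | App M N => exists t, wf_ty t /\ typ G M (TArrow t s) /\ typ G N t
  | Proj M l => typ G M (TRField l s)
  | Rcd fs => exists ss, fields_typ G fs ss /\ le (rec_ty (combine (map fst fs) ss)) s
  | Ext M fs => exists r1 r2, is_rty r1 /\ is_rty r2 /\ wf_ty r1 /\ wf_ty r2 /\
      typ G M r1 /\ typ G (Rcd fs) r2 /\ (forall l, In l (map fst fs) <-> In l (lbl r2)) /\
      le (TRPlus r1 r2) s
  end.

Lemma syntax_directed_typ_le G E a b : syntax_directed_typ G E a ->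
  wf_ty a -> le a b -> wf_ty b -> syntax_directed_typ G E b.
Proof.
  intros H Wa Hab Wb; destruct E; cbn in *.
  - destruct H as [t [Ht Hle]]; exists t; split; [exact Ht | le_via a; assumption].
  - destruct H as [ps [Hps Hle]]; exists ps; split; [exact Hps | le_via a; assumption].
  - destruct H as [t [Wt [TM TN]]]; exists t; split; [exact Wt | split; [| exact TN]].
    apply (t_sub _ _ _ _ TM); [apply le_arrow; [apply le_refl | exact Hab] | solve_wf].
  - apply (t_sub _ _ _ _ H); [apply le_field, Hab | exact Wb].
  - destruct H as [ss [Hss Hle]]; exists ss; split; [exact Hss | le_via a; assumption].
  - destruct H as [r1 [r2 [R1 [R2 [W1 [W2 [T1 [T2 [Hl Hle]]]]]]]]].
    exists r1, r2; repeat split; try assumption; [apply Hl | apply Hl | le_via a; assumption].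
Qed.

Lemma syntax_directed_typ_lam_inter G x M a b :
  syntax_directed_typ G (Lam x M) a -> syntax_directed_typ G (Lam x M) b ->
  syntax_directed_typ G (Lam x M) (TInter a b).
Proof.
  intros [ps1 [H1 L1]] [ps2 [H2 L2]]; exists (ps1 ++ ps2).
  assert (H : forall p, In p (ps1 ++ ps2) -> wf_ty (fst p) /\ wf_ty (snd p) /\
             ~ In x (dom G) /\ typ ((x, fst p) :: G) M (snd p))
    by (intros p Hp; apply in_app_or in Hp as [Hp | Hp]; auto).
  assert (W : forall ps, incl ps (ps1 ++ ps2) -> Forall wf_ty (arrows ps)).
  { intros ps Hps; apply arrows_wf; intros p Hp.
    destruct (H p (Hps p Hp)) as [? [? _]]; split; assumption. }
  assert (W1 := W ps1 (incl_appl _ (incl_refl _))).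
  assert (W2 := W ps2 (incl_appr _ (incl_refl _))).
  split; [exact H |].
  le_via (TInter (big_inter (arrows ps1)) (big_inter (arrows ps2))).
  - unfold arrows at 1; rewrite map_app; apply big_inter_app.
    apply Forall_app; split; assumption.
  - apply le_inter_mono; solve_wf || assumption.
Qed.

Lemma syntax_directed_typ_rcd_inter G fs a b :
  wf_ty a -> wf_ty b ->
  syntax_directed_typ G (Rcd fs) a -> syntax_directed_typ G (Rcd fs) b ->
  syntax_directed_typ G (Rcd fs) (TInter a b).
Proof.
  intros Wa Wb [ss1 [H1 L1]] [ss2 [H2 L2]].
  destruct (fields_typ_inter _ _ _ _ H1 H2) as [ss [H [Le1 Le2]]].
  assert (W := fields_typ_wf _ _ _ H); assert (W1 := fields_typ_wf _ _ _ H1);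
    assert (W2 := fields_typ_wf _ _ _ H2).
  exists ss; split; [exact H |]; apply le_inter_glb.
  - le_via (rec_ty (combine (map fst fs) ss1)); [apply rec_ty_combine_mono |]; assumption.
  - le_via (rec_ty (combine (map fst fs) ss2)); [apply rec_ty_combine_mono |]; assumption.
Qed.

Lemma syntax_directed_typ_ext_inter G M fs a b :
  wf_ty a -> wf_ty b ->
  syntax_directed_typ G (Ext M fs) a -> syntax_directed_typ G (Ext M fs) b ->
  syntax_directed_typ G (Ext M fs) (TInter a b).
Proof.
  intros Wa Wb [r1 [r2 [R1 [R2 [W1 [W2 [T1 [T2 [B L]]]]]]]]]
               [r1' [r2' [R1' [R2' [W1' [W2' [T1' [T2' [B' L']]]]]]]]].
  exists (TInter r1 r1'), (TInter r2 r2').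
  repeat split; auto using t_inter with wf.
  { intros Hk; apply in_or_app; left; apply B, Hk. }
  { intros Hk; apply in_app_or in Hk as [Hk | Hk]; [apply B | apply B']; exact Hk. }
  le_via (TInter (TRPlus r1 (TInter r2 r2')) (TRPlus r1' (TInter r2 r2'))).
  { apply le_plus_distr1; auto with wf. }
  apply le_inter_glb.
  - le_via (TRPlus r1 (TInter r2 r2')); [apply le_inter_l |].
    le_via (TRPlus r1 r2); [| exact L].
    apply le_plus_mono_r; auto with wf; [apply le_inter_l |].
    apply incl_app; [apply incl_refl | intros l Hl; apply B, B', Hl].
  - le_via (TRPlus r1' (TInter r2 r2')); [apply le_inter_r |].
    le_via (TRPlus r1' r2'); [| exact L'].
    apply le_plus_mono_r; auto with wf; [apply le_inter_r |].
    apply incl_app; [intros l Hl; apply B', B, Hl | apply incl_refl].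
Qed.

Lemma syntax_directed_typ_inter G E a b : is_basis G -> wf_ty a -> wf_ty b ->
  syntax_directed_typ G E a -> syntax_directed_typ G E b ->
  syntax_directed_typ G E (TInter a b).
Proof.
  intros HB Wa Wb Ha Hb; destruct E as [x | x M | M N | M l | fs | M fs].
  - destruct Ha as [t [Ht La]], Hb as [t' [Ht' Lb]].
    rewrite (NoDup_fst_unique G x t' t (proj1 HB) Ht' Ht) in Lb.
    exists t; split; [exact Ht | apply le_inter_glb; assumption].
  - apply syntax_directed_typ_lam_inter; assumption.
  - destruct Ha as [t [Wt [TMa TNa]]], Hb as [t' [Wt' [TMb TNb]]].
    exists (TInter t t'); split; [solve_wf | split; [| apply t_inter; assumption]].
    apply (t_sub _ _ _ _ (t_inter _ _ _ _ TMa TMb)); [| solve_wf].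
    le_via (TInter (TArrow (TInter t t') a) (TArrow (TInter t t') b)); [| apply le_arrow_inter].
    apply le_inter_mono; [solve_wf .. | |];
      apply le_arrow; [apply le_inter_l | apply le_refl | apply le_inter_r | apply le_refl].
  - apply (t_sub _ _ _ _ (t_inter _ _ _ _ Ha Hb)); [apply le_field_inter | solve_wf].
  - apply syntax_directed_typ_rcd_inter; assumption.
  - apply syntax_directed_typ_ext_inter; assumption.
Qed.

Section UpToOmega.

Variable P : ty -> Prop.
Hypothesis P_le : forall a b, P a -> wf_ty a -> le a b -> wf_ty b -> P b.
Hypothesis P_inter : forall a b, wf_ty a -> wf_ty b -> P a -> P b -> P (TInter a b).

Lemma omega_or_inter a b : wf_ty a -> wf_ty b ->
  le TOmega a \/ P a -> le TOmega b \/ P b -> le TOmega (TInter a b) \/ P (TInter a b).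
Proof.
  intros Wa Wb [Ha | Ha] [Hb | Hb].
  - left; apply le_inter_glb; assumption.
  - right; apply (P_le b); [exact Hb | exact Wb | | solve_wf].
    apply le_inter_glb; [le_via TOmega; [apply le_omega | exact Ha] | apply le_refl].
  - right; apply (P_le a); [exact Ha | exact Wa | | solve_wf].
    apply le_inter_glb; [apply le_refl | le_via TOmega; [apply le_omega | exact Hb]].
  - right; apply P_inter; assumption.
Qed.

End UpToOmega.

Lemma syntax_directed_typ_rcd_empty G fs : syntax_directed_typ G (Rcd fs) TREmpty.
Proof.
  assert (H : fields_typ G fs (map (fun _ => TOmega) fs))
    by (apply fields_typ_map; intros; split; [exact I | apply t_omega]).
  exists (map (fun _ => TOmega) fs); split; [exact H |].
  assert (W := fields_typ_wf _ _ _ H).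
  le_via (rec_nf (combine (map fst fs) (map (fun _ => TOmega) fs))).
  - apply rec_ty_eqv_rec_nf; solve_wf.
  - apply rec_nf_le_empty; solve_wf.
Qed.

Lemma syntax_directed_typ_rcd_field G fs l M s : is_basis G -> NoDup (map fst fs) ->
  In (l, M) fs -> typ G M s -> syntax_directed_typ G (Rcd fs) (TRField l s).
Proof.
  intros HB HN Hl T.
  set (g := fun f : label * term => if fst f =? l then s else TOmega).
  assert (H : fields_typ G fs (map g fs)).
  { apply fields_typ_map; intros [l' M'] Hf; unfold g; cbn.
    destruct (Nat.eqb_spec l' l) as [-> | _]; [| split; [exact I | apply t_omega]].
    rewrite (NoDup_fst_unique fs l M' M HN Hf Hl).
    split; [exact (typ_wf _ _ _ T HB) | exact T]. }
  exists (map g fs); split; [exact H |].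
  assert (W := fields_typ_wf _ _ _ H).
  le_via (rec_nf (combine (map fst fs) (map g fs))); [apply rec_ty_eqv_rec_nf; solve_wf |].
  apply rec_nf_le_field; [solve_wf |].
  assert (Hg : g (l, M) = s) by (unfold g; cbn; rewrite Nat.eqb_refl; reflexivity).
  rewrite combine_map_fst, <- Hg; exact (in_map (fun f => (fst f, g f)) _ _ Hl).
Qed.

Lemma typ_syntax_directed G E s : typ G E s -> is_basis G -> wf_term E ->
  le TOmega s \/ syntax_directed_typ G E s.
Proof.
  induction 1 as [G x s H | G x M s t Hx Ws T _ | G M N s t TM _ TN _ | G M s t Ts IHs Tt IHt
                  | G M | G M s t Ts IH Hle Wt | G fs | G fs l M s Hl T _ | G M l s T _
                  | G M fs r1 r2 R1 R2 T1 _ T2 _ Hlbl]; intros HB HE.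
  - right; exists s; split; [exact H | apply le_refl].
  - right; exists [(s, t)]; split; [| apply le_refl].
    intros p [<- | []]; repeat split; try assumption.
    apply (typ_wf _ _ _ T), is_basis_cons; assumption.
  - right; exists s; split; [exact (typ_wf _ _ _ TN HB) | split; assumption].
  - apply (omega_or_inter (syntax_directed_typ G M)).
    + intros; eapply syntax_directed_typ_le; eassumption.
    + intros; apply syntax_directed_typ_inter; assumption.
    + exact (typ_wf _ _ _ Ts HB).
    + exact (typ_wf _ _ _ Tt HB).
    + exact (IHs HB HE).
    + exact (IHt HB HE).
  - left; apply le_refl.
  - destruct (IH HB HE) as [Ho | Hd]; [left | right].
    + assert (Ws := typ_wf _ _ _ Ts HB); le_via s; assumption.
    + apply (syntax_directed_typ_le _ _ s); [| exact (typ_wf _ _ _ Ts HB) | |]; assumption.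
  - right; apply syntax_directed_typ_rcd_empty.
  - inversion HE; subst; right; apply (syntax_directed_typ_rcd_field _ _ _ M); assumption.
  - right; exact T.
  - right; exists r1, r2; repeat split; try assumption; try apply Hlbl.
    + exact (typ_wf _ _ _ T1 HB).
    + exact (typ_wf _ _ _ T2 HB).
    + apply le_refl.
Qed.

Lemma syntax_directed_typ_sound G E s : wf_ty s -> syntax_directed_typ G E s -> typ G E s.
Proof.
  intros Ws; destruct E as [x | x M | M N | M l | fs | M fs]; cbn.
  - intros [t [Ht Hle]]; exact (t_sub _ _ _ _ (t_var _ _ _ Ht) Hle Ws).
  - intros [ps [Hps Hle]]; refine (t_sub _ _ _ _ (typ_big_inter _ _ (arrows ps) _) Hle Ws).
    intros a Ha; apply in_map_iff in Ha as [p [<- Hp]].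
    destruct (Hps p Hp) as [W1 [_ [Hx T]]]; apply t_lam; assumption.
  - intros [t [_ [TM TN]]]; exact (t_app _ _ _ _ _ TM TN).
  - apply t_proj.
  - intros [ss [Hss Hle]]; exact (t_sub _ _ _ _ (typ_rec_ty _ _ _ _ Hss (incl_refl fs)) Hle Ws).
  - intros [r1 [r2 [R1 [R2 [_ [_ [T1 [T2 [Hl Hle]]]]]]]]].
    exact (t_sub _ _ _ _ (t_ext _ _ _ _ _ R1 R2 T1 T2 Hl) Hle Ws).
Qed.

Theorem lemma3p14 (G : basis) (s : ty) :
  is_basis G -> wf_ty s -> ~ le TOmega s ->
  (* (1) *)
  (forall x : var,
     typ G (Var x) s <-> exists t, In (x, t) G /\ le t s) /\
  (* (2) *)
  (forall (x : var) (M : term), wf_term (Lam x M) ->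
     typ G (Lam x M) s <->
     exists ps : list (ty * ty),
       (forall p, In p ps ->
          wf_ty (fst p) /\ wf_ty (snd p) /\ ~ In x (dom G) /\
          typ ((x, fst p) :: G) M (snd p)) /\
       le (big_inter (map (fun p => TArrow (fst p) (snd p)) ps)) s) /\
  (* (3) *)
  (forall M N : term, wf_term (App M N) ->
     typ G (App M N) s <->
     exists t, wf_ty t /\ typ G M (TArrow t s) /\ typ G N t) /\
  (* (4) *)
  (forall fs : list (label * term), wf_term (Rcd fs) ->
     typ G (Rcd fs) s <->
     exists ss : list ty,
       Forall2 (fun f t => wf_ty t /\ typ G (snd f) t) fs ss /\
       le (rec_ty (combine (map fst fs) ss)) s) /\
  (* (5) *)
  (forall (M : term) (l : label), wf_term (Proj M l) ->
     typ G (Proj M l) s <-> typ G M (TRField l s)) /\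
  (* (6) *)
  (forall (M : term) (fs : list (label * term)), wf_term (Ext M fs) ->
     typ G (Ext M fs) s <->
     exists r1 r2, is_rty r1 /\ is_rty r2 /\ wf_ty r1 /\ wf_ty r2 /\
       typ G M r1 /\ typ G (Rcd fs) r2 /\
       (forall l, In l (map fst fs) <-> In l (lbl r2)) /\
       le (TRPlus r1 r2) s).
Proof.
  intros HB Ws Hs.
  assert (gen : forall E, wf_term E -> typ G E s <-> syntax_directed_typ G E s).
  { intros E HE; split; [intros H | apply syntax_directed_typ_sound, Ws].
    destruct (typ_syntax_directed G E s H HB HE) as [Ho | Hd]; [contradiction | exact Hd]. }
  exact (conj (fun x => gen (Var x) (wf_var x))
        (conj (fun x M => gen (Lam x M))
        (conj (fun M N => gen (App M N))
        (conj (fun fs => gen (Rcd fs))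
        (conj (fun M l => gen (Proj M l))
              (fun M fs => gen (Ext M fs))))))).
Qed.
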